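(* Let $A,B,C,D$ be real random variables on a common probability space with finite second moments, $\mathbb{E}[A]\neq0$, $\mathbb{E}[C]\neq 0$, and set $R=\mathbb{E}[A]/\mathbb{E}[C]$. Let $n,m\ge1$, let $(A_i,B_i,C_i,D_i)_{i=1,\dots,n}$ be i.i.d. copies of $(A,B,C,D)$, and let $(B_i,D_i)_{i=n+1,\dots,n+m}$ be i.i.d. copies of $(B,D)$, independent of the first $n$ samples. For $\alpha,\beta\in\mathbb{R}$ define the exact and approximate control-variate numerators and denominators $$N_\alpha=\overline{A_n}+\alpha(\mathbb{E}[B]-\overline{B_n}),\quad M_\beta=\overline{C_n}+\beta(\mathbb{E}[D]-\overline{D_n}),$$ $$\tilde N_\alpha=\overline{A_n}+\alpha(\overline{B_{n+m}}-\overline{B_n}),\quad \tilde M_\beta=\overline{C_n}+\beta(\overline{D_{n+m}}-\overline{D_n}).$$ Then for all $\alpha,\beta\in\mathbb{R}$, $$\Phi(\tilde N_\alpha,\tilde M_\beta)-\Phi(\overline{A_n},\overline{C_n})=\frac{m}{n+m}\Big(\Phi(N_\alpha,M_\beta)-\Phi(\overline{A_n},\overline{C_n})\Big),$$ $$\Phi(\tilde N_\alpha,\overline{C_n})-\Phi(\overline{A_n},\overline{C_n})=\frac{m}{n+m}\Big(\Phi(N_\alpha,\overline{C_n})-\Phi(\overline{A_n},\overline{C_n})\Big).$$ Consequently the minimizers over $(\alpha,\beta)$ (resp. over $\alpha$) of the approximate-control-variate quantities coincide with those of the exact-control-variate quantities.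
   Context: For random variables $X$ with samples $X_1,X_2,\dots$, $\overline{X_k}=\frac1k\sum_{i=1}^k X_i$. For real random variables $X,Z$ with finite second moments and $\mathbb{E}[Z]\neq0$, define the first-order (delta-method) approximation of the variance of the ratio $X/Z$: $$\Phi(X,Z)=\frac{\mathrm{Var}(X)}{\mathbb{E}[Z]^2}+\frac{\mathbb{E}[X]^2}{\mathbb{E}[Z]^4}\mathrm{Var}(Z)-2\frac{\mathbb{E}[X]}{\mathbb{E}[Z]^3}\mathrm{Cov}(X,Z).$$ The paper uses $\Phi$ of numerator and denominator estimators as the variance of the corresponding ratio estimator of $R$: $\overline{A_n}/\overline{C_n}$ (MC/MC), $N_\alpha/M_\beta$ (CV/CV, with known $\mathbb{E}[B],\mathbb{E}[D]$), $N_\alpha/\overline{C_n}$ (CV/MC), and their approximate-control-variate analogues $\tilde N_\alpha/\tilde M_\beta$ (ACV/ACV) and $\tilde N_\alpha/\overline{C_n}$ (ACV/MC), in which the unknown control-variate means are replaced by sample means over $n+m$ samples. *)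

From HB Require Import structures.
From mathcomp Require Import all_boot all_order all_algebra.
From mathcomp Require Import all_classical all_reals all_analysis.
Set Implicit Arguments.
Unset Strict Implicit.
Unset Printing Implicit Defensive.
Import Order.TTheory GRing.Theory Num.Theory.
Local Open Scope classical_set_scope.
Local Open Scope ring_scope.

Section Defs.
Context {d : measure_display} {T : measurableType d} {R : realType}.
Variable P : probability T R.

(** Sample mean  \overline{X_k} = (1/k) sum_{i=1}^k X_i  (0-based indices 0..k-1). *)
Definition smean (X : nat -> T -> R) (k : nat) : T -> R :=
  fun t => (\sum_(i < k) X i t) / k%:R.

(** Delta-method approximation of Var(X/Z).  All moments appearing are finite
    under the hypotheses of the theorem, so [fine] is just the real value. *)
Definition Phi (X Z : T -> R) : R :=
  let EX := fine 'E_P[X] in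
  let EZ := fine 'E_P[Z] in
  fine 'V_P[X] / EZ ^+ 2 + EX ^+ 2 / EZ ^+ 4 * fine 'V_P[Z]
  - 2 * EX / EZ ^+ 3 * fine (covariance P X Z).

Definition mutually_independent (I : set nat) (E : nat -> set (set T)) : Prop :=
  forall (F : seq nat) (e : nat -> set T),
    uniq F -> [set` F] `<=` I -> (forall k, k \in F -> E k (e k)) ->
    P (\bigcap_(k in [set` F]) e k) = (\prod_(k <- F) P (e k))%E.

Definition events_of {d' : measure_display} {V : measurableType d'}
  (X : T -> V) : set (set T) :=
  [set e | exists S : set V, measurable S /\ e = X @^-1` S].

Definition same_law {d' : measure_display} {V : measurableType d'}
  (X Y : T -> V) : Prop :=
  forall S : set V, measurable S -> P (X @^-1` S) = P (Y @^-1` S).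

End Defs.

(* Once the means of X and Z are fixed, Phi(X, Z) is a linear combination of
   Var X, Var Z and Cov(X, Z).  Adding a mean-zero term (a U, b V) to a sample
   mean changes neither mean, so each side of the identity is the same linear
   combination of second moments involving the corrections U~ = B_(n+m) - B_n,
   V~ = D_(n+m) - D_n, resp. U = E[B] - B_n, V = E[D] - D_n.  For uncorrelated
   samples with common cross-covariance s, Cov(X_k, Y_l) = s / max(k, l); hence
   Cov(A_n, U~) = s (1/(n+m) - 1/n) = m/(n+m) Cov(A_n, U),
   Var U~ = m/(n+m) Var U, and likewise for every moment involving a
   correction.  The two differences of Phi are therefore proportional with
   factor m/(n+m) > 0, so they have the same minimizers. *)

From HB Require Import structures.
From mathcomp Require Import all_boot all_order all_algebra.
From mathcomp Require Import all_classical all_reals all_analysis.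
From mathcomp Require Import measurable_realfun ring.
Import Order.TTheory GRing.Theory Num.Theory.
Local Open Scope classical_set_scope.
Local Open Scope ring_scope.

Set Implicit Arguments.
Unset Strict Implicit.
Unset Printing Implicit Defensive.

Section real_moments.
Context d (T : measurableType d) (R : realType) (P : probability T R).
Local Notation L2 := (Lfun P 2%:E).

Definition meanr (X : T -> R) : R := fine 'E_P[X].
Definition covr (X Y : T -> R) : R := fine (covariance P X Y).

Lemma PhiE (X Z : T -> R) : Phi P X Z =
  covr X X / meanr Z ^+ 2 + meanr X ^+ 2 / meanr Z ^+ 4 * covr Z Z
  - 2 * meanr X / meanr Z ^+ 3 * covr X Z.
Proof. by []. Qed.

Let one_le_two : (1 <= 2%:E :> \bar R)%E. Proof. by rewrite lee1n. Qed.

Lemma Lfun2_Lfun1 (X : T -> R) : X \in L2 -> X \in Lfun P 1.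
Proof. exact/Lfun_subset12/fin_num_measure. Qed.

Lemma Lfun2B (X Y : T -> R) :
  X \in L2 -> Y \in L2 -> (fun t => X t - Y t) \in L2.
Proof. by move=> hX hY; rewrite rpredB // ?one_le_two. Qed.

Lemma mulr_funE (a : R) (X : T -> R) : (fun t => a * X t) = a \o* X.
Proof. by apply/funext => t; rewrite /= mulrC. Qed.

Lemma Lfun2Z (X : T -> R) a : X \in L2 -> (fun t => a * X t) \in L2.
Proof. by move=> hX; rewrite mulr_funE Lfun_scale ?ler1n. Qed.

Lemma Lfun2_affine (X U : T -> R) a :
  X \in L2 -> U \in L2 -> (fun t => X t + a * U t) \in L2.
Proof.
by move=> hX hU; apply: (Lfun_addr_closed P one_le_two).2; rewrite ?Lfun2Z.
Qed.

Lemma smeanE (X : nat -> T -> R) k :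
  smean X k = (fun t => k%:R^-1 * (\sum_(i < k) X i) t).
Proof. by apply/funext => t; rewrite /smean fct_sumE mulrC. Qed.

Lemma Lfun2_sum (X : nat -> T -> R) k :
  (forall i, (i < k)%N -> X i \in L2) -> \sum_(i < k) X i \in L2.
Proof. by move=> hX; rewrite rpred_sum // ?one_le_two // => i _; exact: hX. Qed.

Lemma Lfun2_smean (X : nat -> T -> R) k :
  (forall i, (i < k)%N -> X i \in L2) -> smean X k \in L2.
Proof. by move=> hX; rewrite smeanE Lfun2Z // Lfun2_sum. Qed.

Lemma expectation_meanr (X : T -> R) :
  X \in Lfun P 1 -> ('E_P[X] = (meanr X)%:E)%E.
Proof. by move=> hX; rewrite fineK // expectation_fin_num. Qed.

Lemma meanr_cst c : meanr (fun _ => c) = c.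
Proof. by rewrite /meanr expectation_cst. Qed.

Lemma meanrB (X Y : T -> R) : X \in L2 -> Y \in L2 ->
  meanr (fun t => X t - Y t) = meanr X - meanr Y.
Proof.
move=> /Lfun2_Lfun1 hX /Lfun2_Lfun1 hY.
by rewrite {1}/meanr expectationB // !expectation_meanr.
Qed.

Lemma meanr_affine (X U : T -> R) a : X \in L2 -> U \in L2 ->
  meanr (fun t => X t + a * U t) = meanr X + a * meanr U.
Proof.
move=> hX hU.
rewrite {1}/meanr expectationD ?Lfun2_Lfun1 ?Lfun2Z // mulr_funE.
by rewrite expectationZl ?Lfun2_Lfun1 // !expectation_meanr ?Lfun2_Lfun1.
Qed.

Lemma meanr_sum (X : nat -> T -> R) k : (forall i, (i < k)%N -> X i \in L2) ->
  meanr (\sum_(i < k) X i) = \sum_(i < k) meanr (X i).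
Proof.
elim: k => [|k IHk] hX.
  by rewrite !big_ord0 -[0]/(fun _ => 0 : R) meanr_cst.
have hXk i : (i < k)%N -> X i \in L2 by move=> /ltnW; exact: hX.
have hS := Lfun2_sum hXk.
rewrite !big_ord_recr /= -IHk // {1}/meanr expectationD ?Lfun2_Lfun1 ?hX //.
by rewrite !expectation_meanr ?Lfun2_Lfun1 ?hX.
Qed.

Lemma meanr_smean (X : nat -> T -> R) k e : (0 < k)%N ->
  (forall i, (i < k)%N -> X i \in L2) ->
  (forall i, (i < k)%N -> meanr (X i) = e) -> meanr (smean X k) = e.
Proof.
move=> k_gt0 hX hXe.
have hS := Lfun2_sum hX.
rewrite smeanE mulr_funE {1}/meanr expectationZl ?Lfun2_Lfun1 //.
rewrite expectation_meanr ?Lfun2_Lfun1 // meanr_sum //=.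
rewrite (eq_bigr (fun _ => e)) => [|i _]; last exact: hXe.
rewrite sumr_const card_ord -[e *+ k]mulr_natl mulrA mulVf ?mul1r //.
by rewrite pnatr_eq0 -lt0n.
Qed.

Lemma covariance_covr (X Y : T -> R) : X \in L2 -> Y \in L2 ->
  covariance P X Y = (covr X Y)%:E.
Proof.
move=> hX hY; have hXY : X * Y \in Lfun P 1 := Lfun2_mul_Lfun1 hX hY.
by rewrite fineK // covariance_fin_num // Lfun2_Lfun1.
Qed.

Lemma covrC (X Y : T -> R) : covr X Y = covr Y X.
Proof. by rewrite /covr covarianceC. Qed.

Lemma covr_cstl c (X : T -> R) : covr (fun _ => c) X = 0.
Proof. by rewrite /covr covariance_cst_l. Qed.

Lemma covr_cstr (X : T -> R) c : covr X (fun _ => c) = 0.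
Proof. by rewrite covrC covr_cstl. Qed.

Lemma covrDl (X Y Z : T -> R) : X \in L2 -> Y \in L2 -> Z \in L2 ->
  covr (X + Y) Z = covr X Z + covr Y Z.
Proof.
by move=> hX hY hZ; rewrite {1}/covr covarianceDl // !covariance_covr.
Qed.

Lemma covrBl (X Y Z : T -> R) : X \in L2 -> Y \in L2 -> Z \in L2 ->
  covr (fun t => X t - Y t) Z = covr X Z - covr Y Z.
Proof.
by move=> hX hY hZ; rewrite {1}/covr covarianceBl // !covariance_covr.
Qed.

Lemma covrBr (X Y Z : T -> R) : X \in L2 -> Y \in L2 -> Z \in L2 ->
  covr X (fun t => Y t - Z t) = covr X Y - covr X Z.
Proof. by move=> hX hY hZ; rewrite covrC covrBl // !(covrC X). Qed.

Lemma covrBB (X Y Z V : T -> R) :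
  X \in L2 -> Y \in L2 -> Z \in L2 -> V \in L2 ->
  covr (fun t => X t - Y t) (fun t => Z t - V t) =
  covr X Z - covr X V - covr Y Z + covr Y V.
Proof.
move=> hX hY hZ hV.
by rewrite covrBl ?Lfun2B // !covrBr //; ring.
Qed.

Lemma covrZl a (X Y : T -> R) : X \in L2 -> Y \in L2 ->
  covr (fun t => a * X t) Y = a * covr X Y.
Proof.
move=> hX hY; have hXY : X * Y \in Lfun P 1 := Lfun2_mul_Lfun1 hX hY.
by rewrite mulr_funE {1}/covr covarianceZl // ?covariance_covr // Lfun2_Lfun1.
Qed.

Lemma covrZr a (X Y : T -> R) : X \in L2 -> Y \in L2 ->
  covr X (fun t => a * Y t) = a * covr X Y.
Proof. by move=> hX hY; rewrite covrC covrZl // covrC. Qed.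

Lemma covr_affinel (X U Y : T -> R) a : X \in L2 -> U \in L2 -> Y \in L2 ->
  covr (fun t => X t + a * U t) Y = covr X Y + a * covr U Y.
Proof.
by move=> hX hU hY; rewrite -[fun t => _]/(X + _) covrDl ?Lfun2Z // covrZl.
Qed.

Lemma covr_affine (X U Z V : T -> R) a b :
  X \in L2 -> U \in L2 -> Z \in L2 -> V \in L2 ->
  covr (fun t => X t + a * U t) (fun t => Z t + b * V t) =
  covr X Z + b * covr X V + a * covr U Z + a * b * covr U V.
Proof.
move=> hX hU hZ hV.
rewrite covr_affinel ?Lfun2_affine // covrC covr_affinel //.
rewrite (covrC U) covr_affinel //.
by rewrite !(covrC _ X) (covrC V U) (covrC Z U); ring.
Qed.

Lemma covr_suml (X : nat -> T -> R) k Y :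
  (forall i, (i < k)%N -> X i \in L2) -> Y \in L2 ->
  covr (\sum_(i < k) X i) Y = \sum_(i < k) covr (X i) Y.
Proof.
elim: k => [|k IHk] hX hY; first by rewrite !big_ord0 (covr_cstl 0).
have hXk i : (i < k)%N -> X i \in L2 by move=> /ltnW; exact: hX.
by rewrite !big_ord_recr /= covrDl ?hX ?Lfun2_sum // IHk.
Qed.

Lemma covr_sumr (X : T -> R) (Y : nat -> T -> R) l : X \in L2 ->
  (forall j, (j < l)%N -> Y j \in L2) ->
  covr X (\sum_(j < l) Y j) = \sum_(j < l) covr X (Y j).
Proof.
by move=> hX hY; rewrite covrC covr_suml //; under eq_bigr do rewrite covrC.
Qed.

Lemma covr_smean (X Y : nat -> T -> R) k l c : (0 < k <= l)%N ->
  (forall i, (i < k)%N -> X i \in L2) -> (forall j, (j < l)%N -> Y j \in L2) ->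
  (forall i j, (i < k)%N -> (j < l)%N ->
     covr (X i) (Y j) = if i == j then c else 0) ->
  covr (smean X k) (smean Y l) = c / l%:R.
Proof.
move=> /andP[k_gt0 le_kl] hX hY hXY.
have [hSX hSY] := (Lfun2_sum hX, Lfun2_sum hY).
have row (i : 'I_k) : \sum_(j < l) covr (X i) (Y j) = c.
  have il : (i < l)%N := leq_trans (ltn_ord i) le_kl.
  rewrite (bigD1 (Ordinal il)) //= hXY // eqxx big1 ?addr0 // => j ji.
  rewrite hXY // ifN //; apply: contra ji => /eqP ij.
  by apply/eqP/val_inj; rewrite /= ij.
rewrite !smeanE covrZl ?Lfun2Z // covrZr // covr_suml //.
rewrite (eq_bigr (fun _ => c)) => [|i _]; last by rewrite covr_sumr ?hX // row.
rewrite sumr_const card_ord -[c *+ k]mulr_natl.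
by field; rewrite !pnatr_eq0 -!lt0n k_gt0 (leq_trans k_gt0).
Qed.

End real_moments.

Section independence.
Context d (T : measurableType d) (R : realType) (P : probability T R).
Local Open Scope ereal_scope.

Definition independent_rv (X Y : T -> R) : Prop :=
  forall S1 S2 : set R, measurable S1 -> measurable S2 ->
  P (X @^-1` S1 `&` Y @^-1` S2) = P (X @^-1` S1) * P (Y @^-1` S2).

Lemma integrable_distribution_EFin (X : {RV P >-> R}) :
  (X : T -> R) \in Lfun P 1 -> (distribution P X).-integrable setT EFin.
Proof.
move=> X1; have := integrable_pushforward (mu := P) (D := setT)
  (measurable_funPT X) (@EFin_measurable R setT).
by rewrite preimage_setT; apply => //; exact/Lfun1_integrable.
Qed.

Lemma expectation_distribution (X : {RV P >-> R}) :
  (X : T -> R) \in Lfun P 1 -> 'E_P[X] = \int[distribution P X]_x x%:E.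
Proof.
by move=> /Lfun1_integrable X1; rewrite integral_distribution // unlock.
Qed.

Lemma expectationM_independent (X Y : {RV P >-> R}) :
  (X : T -> R) \in Lfun P 2%:E -> (Y : T -> R) \in Lfun P 2%:E ->
  independent_rv X Y -> 'E_P[((X : T -> R) * Y)%R] = 'E_P[X] * 'E_P[Y].
Proof.
move=> X2 Y2 XY; have [X1 Y1] := (Lfun2_Lfun1 X2, Lfun2_Lfun1 Y2).
pose mu1 := distribution P X; pose mu2 := distribution P Y.
pose XY' := mfun_Sub (mem_set (measurable_fun_pair
  (measurable_funPT X) (measurable_funPT Y))).
pose f : R * R -> \bar R := fun z => (z.1 * z.2)%:E.
have mf : measurable_fun setT f.
  by apply/measurable_EFinP; apply: measurable_funM.
have iXY : P.-integrable setT (f \o XY').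
  exact/Lfun1_integrable/Lfun2_mul_Lfun1.
(* Independence identifies the joint law with the product of the marginals,
   so Fubini factorizes E[X Y]. *)
have joint : forall A, measurable A -> (mu1 \x mu2) A = distribution P XY' A.
  by apply: product_measure_unique => S1 S2 mS1 mS2; rewrite -XY.
have EXY : 'E_P[((X : T -> R) * Y)%R] = \int[mu1 \x mu2]_z f z.
  rewrite (eq_measure_integral _ (fun A mA _ => joint A mA)).
  by rewrite integral_distribution // unlock.
have iF : (mu1 \x mu2).-integrable setT f.
  apply/integrableP; split => //.
  rewrite (eq_measure_integral _ (fun A mA _ => joint A mA)).
  rewrite ge0_integral_distribution //; first by case/integrableP: iXY.
  exact: measurableT_comp.
rewrite EXY -integral12_prod_meas1 // /fubini_F /f /=.
under eq_integral => x _.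
  under eq_integral => y _ do rewrite EFinM.
  rewrite integralZl ?integrable_distribution_EFin //.
  over.
rewrite /= -expectation_distribution // expectation_meanr //.
rewrite integralZr ?integrable_distribution_EFin //.
by rewrite -expectation_distribution.
Qed.

Lemma covr_independent (X Y : {RV P >-> R}) :
  (X : T -> R) \in Lfun P 2%:E -> (Y : T -> R) \in Lfun P 2%:E ->
  independent_rv X Y -> covr P X Y = 0%R.
Proof.
move=> X2 Y2 XY; have XY1 := Lfun2_mul_Lfun1 X2 Y2.
have X1 := Lfun2_Lfun1 X2; have Y1 := Lfun2_Lfun1 Y2.
rewrite /covr covarianceE // (expectationM_independent X2 Y2 XY).
by rewrite subee // fin_numM // expectation_fin_num.
Qed.

End independence.

Section same_law.
Context d (T : measurableType d) (R : realType) (P : probability T R).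
Context d' (W : measurableType d') (V V' : T -> W).
Hypotheses (mV : measurable_fun setT V) (mV' : measurable_fun setT V').
Hypothesis VV' : same_law P V V'.
Local Open Scope ereal_scope.

Let distributionE (g : W -> \bar R) :
  \int[distribution P (mfun_Sub (mem_set mV))]_y g y =
  \int[distribution P (mfun_Sub (mem_set mV'))]_y g y.
Proof. by apply: eq_measure_integral => S mS _; exact: VV'. Qed.

Lemma ge0_integral_same_law (g : W -> \bar R) : measurable_fun setT g ->
  (forall y, 0 <= g y) -> \int[P]_x g (V x) = \int[P]_x g (V' x).
Proof.
move=> mg g0.
have := ge0_integral_distribution (mfun_Sub (mem_set mV)) mg g0.
have := ge0_integral_distribution (mfun_Sub (mem_set mV')) mg g0.
by rewrite /= => <- <-; exact: distributionE.
Qed.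

Lemma integral_same_law (g : W -> \bar R) : measurable_fun setT g ->
  P.-integrable setT (g \o V) -> P.-integrable setT (g \o V') ->
  \int[P]_x g (V x) = \int[P]_x g (V' x).
Proof.
move=> mg iV iV'.
have := integral_distribution (X := mfun_Sub (mem_set mV)) mg iV.
have := integral_distribution (X := mfun_Sub (mem_set mV')) mg iV'.
by rewrite /= => <- <-; exact: distributionE.
Qed.

Lemma Lfun_same_law (p : W -> R) (r : R) : measurable_fun setT p ->
  (fun t => p (V' t)) \in Lfun P r%:E -> (fun t => p (V t)) \in Lfun P r%:E.
Proof.
move=> mp; rewrite !inE => /andP[_]; rewrite !inE /finite_norm => pV'.
apply/andP; split; first by rewrite inE; exact: measurableT_comp.
rewrite inE /finite_norm; apply: le_lt_trans pV'; rewrite le_eqVlt.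
apply/predU1l; rewrite unlock /=; congr (_ `^ _).
apply: (ge0_integral_same_law (g := fun y => (`|p y| `^ r)%:E)).
- apply/measurable_EFinP; apply: (measurableT_comp (measurable_powR _)) => //.
  exact: measurableT_comp.
- by move=> y; rewrite lee_fin powR_ge0.
Qed.

Lemma expectation_same_law (p : W -> R) : measurable_fun setT p ->
  (fun t => p (V' t)) \in Lfun P 1 ->
  'E_P[fun t => p (V t)] = 'E_P[fun t => p (V' t)].
Proof.
move=> mp pV'; have pV := Lfun_same_law mp pV'.
rewrite unlock; apply: (integral_same_law (g := EFin \o p)).
- exact/measurable_EFinP.
- exact/Lfun1_integrable.
- exact/Lfun1_integrable.
Qed.

Lemma covariance_same_law (p q : W -> R) :
  measurable_fun setT p -> measurable_fun setT q ->
  (fun t => p (V' t)) \in Lfun P 2%:E -> (fun t => q (V' t)) \in Lfun P 2%:E ->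
  covariance P (fun t => p (V t)) (fun t => q (V t)) =
  covariance P (fun t => p (V' t)) (fun t => q (V' t)).
Proof.
move=> mp mq pV' qV'.
have pV := Lfun_same_law mp pV'; have qV := Lfun_same_law mq qV'.
have pqV := Lfun2_mul_Lfun1 pV qV; have pqV' := Lfun2_mul_Lfun1 pV' qV'.
have [pV1 qV1] := (Lfun2_Lfun1 pV, Lfun2_Lfun1 qV).
have [pV'1 qV'1] := (Lfun2_Lfun1 pV', Lfun2_Lfun1 qV').
rewrite !covarianceE // !expectation_same_law //; congr (_ - _).
exact: (expectation_same_law (p := fun w => p w * q w)%R
  (measurable_funM mp mq)).
Qed.

Lemma same_law_moments (p q : W -> R) :
  measurable_fun setT p -> measurable_fun setT q ->
  (fun t => p (V' t)) \in Lfun P 2%:E -> (fun t => q (V' t)) \in Lfun P 2%:E ->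
  [/\ (fun t => p (V t)) \in Lfun P 2%:E,
      meanr P (fun t => p (V t)) = meanr P (fun t => p (V' t)) &
      covr P (fun t => p (V t)) (fun t => q (V t)) =
      covr P (fun t => p (V' t)) (fun t => q (V' t))].
Proof.
move=> mp mq pV' qV'; split; first exact: Lfun_same_law.
  by rewrite /meanr expectation_same_law // Lfun2_Lfun1.
by rewrite /covr covariance_same_law.
Qed.

End same_law.

Section Phi_control_variate.
Context d (T : measurableType d) (R : realType) (P : probability T R).
Local Notation L2 := (Lfun P 2%:E).
Variables (X Z U V U' V' : T -> R) (r : R).
Hypotheses (X2 : X \in L2) (Z2 : Z \in L2) (U2 : U \in L2) (V2 : V \in L2)
  (U'2 : U' \in L2) (V'2 : V' \in L2).
Hypotheses (EU : meanr P U = 0) (EV : meanr P V = 0)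
  (EU' : meanr P U' = 0) (EV' : meanr P V' = 0).
Hypotheses (XU : covr P X U = r * covr P X U')
  (XV : covr P X V = r * covr P X V') (ZU : covr P Z U = r * covr P Z U')
  (ZV : covr P Z V = r * covr P Z V') (UU : covr P U U = r * covr P U' U')
  (VV : covr P V V = r * covr P V' V') (UV : covr P U V = r * covr P U' V').

Lemma Phi_control_scale a b :
  Phi P (fun t => X t + a * U t) (fun t => Z t + b * V t) - Phi P X Z =
  r * (Phi P (fun t => X t + a * U' t) (fun t => Z t + b * V' t) - Phi P X Z).
Proof.
rewrite !PhiE !meanr_affine // EU EV EU' EV' !covr_affine //.
rewrite !(covrC P U) !(covrC P V) !(covrC P U') !(covrC P V').
by rewrite XU XV ZU ZV UU VV UV !mulr0 !addr0; ring.
Qed.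

End Phi_control_variate.

Lemma ler_shift_scale (R : realFieldType) (c r x x' y y' : R) : 0 < r ->
  x' - c = r * (x - c) -> y' - c = r * (y - c) -> (x' <= y') = (x <= y).
Proof.
move=> r_gt0 hx hy.
by rewrite -(lerD2r (- c)) hx hy ler_pM2l // lerD2r.
Qed.

Inductive coord := cA | cB | cC | cD.

Definition is_control (c : coord) : bool :=
  match c with cB | cD => true | _ => false end.

Definition proj4 {X : Type} (c : coord) (v : X * X * X * X) : X :=
  match c with cA => v.1.1.1 | cB => v.1.1.2 | cC => v.1.2 | cD => v.2 end.

(* Projection of the pair (B_i, D_i); junk (the D component) for [cA], [cC]. *)
Definition proj_control {X : Type} (c : coord) (v : X * X) : X :=
  if c is cB then v.1 else v.2.

Lemma measurable_proj4 (R : realType) c : measurable_fun setT (@proj4 R c).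
Proof. by case: c => /=; do ?apply: measurableT_comp. Qed.

Lemma measurable_proj_control (R : realType) c :
  measurable_fun setT (@proj_control R c).
Proof.
by case: c; [exact: measurable_snd | exact: measurable_fst | ..];
  exact: measurable_snd.
Qed.

Section iid_sampling.
Context d (T : measurableType d) (R : realType) (P : probability T R).
Local Notation L2 := (Lfun P 2%:E).
Variables (A B C D : {RV P >-> R}) (As Bs Cs Ds : nat -> {RV P >-> R}).
Variables n m : nat.
Hypotheses (A2 : (A : T -> R) \in L2) (B2 : (B : T -> R) \in L2)
  (C2 : (C : T -> R) \in L2) (D2 : (D : T -> R) \in L2).
Hypothesis n_gt0 : (0 < n)%N.
Hypothesis head_law : forall i, (i < n)%N ->
  same_law P (fun t => (As i t, Bs i t, Cs i t, Ds i t))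
             (fun t => (A t, B t, C t, D t)).
Hypothesis tail_law : forall i, (n <= i < n + m)%N ->
  same_law P (fun t => (Bs i t, Ds i t)) (fun t => (B t, D t)).
Hypothesis samples_indep : mutually_independent P [set i | (i < n + m)%N]
  (fun i => if (i < n)%N
            then events_of (fun t => (As i t, Bs i t, Cs i t, Ds i t))
            else events_of (fun t => (Bs i t, Ds i t))).

Definition sample (c : coord) i : {RV P >-> R} :=
  match c with cA => As i | cB => Bs i | cC => Cs i | cD => Ds i end.

Definition pop (c : coord) : {RV P >-> R} :=
  match c with cA => A | cB => B | cC => C | cD => D end.

(* Coordinate [c] of sample vector [i] exists: all four are drawn for the first
   [n] vectors, only the control variates [B] and [D] for the next [m]. *)
Definition observed c i : bool := (i < n)%N || (i < n + m)%N && is_control c.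

Lemma sample_head c i :
  (sample c i : T -> R) = fun t => proj4 c (As i t, Bs i t, Cs i t, Ds i t).
Proof. by case: c. Qed.

Lemma pop_head c : (pop c : T -> R) = fun t => proj4 c (A t, B t, C t, D t).
Proof. by case: c. Qed.

Lemma sample_tail c i : is_control c ->
  (sample c i : T -> R) = fun t => proj_control c (Bs i t, Ds i t).
Proof. by case: c. Qed.

Lemma pop_tail c : is_control c ->
  (pop c : T -> R) = fun t => proj_control c (B t, D t).
Proof. by case: c. Qed.

Lemma Lfun2_pop c : (pop c : T -> R) \in L2.
Proof. by case: c. Qed.

Lemma measurable_vec4 (X1 X2 X3 X4 : {RV P >-> R}) :
  measurable_fun setT (fun t => (X1 t, X2 t, X3 t, X4 t)).
Proof. by do 3 apply: measurable_fun_pair => //. Qed.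

Lemma measurable_vec2 (X1 X2 : {RV P >-> R}) :
  measurable_fun setT (fun t => (X1 t, X2 t)).
Proof. exact: measurable_fun_pair. Qed.

Lemma observed_head c : forall i, (i < n)%N -> observed c i.
Proof. by move=> i; rewrite /observed => ->. Qed.

Lemma observed_tail c : is_control c -> forall i, (i < n + m)%N -> observed c i.
Proof. by rewrite /observed => -> i ->; rewrite orbT. Qed.

Lemma observed_lt c i : observed c i -> (i < n + m)%N.
Proof. by case/orP => [/leq_trans/(_ (leq_addr m n)) | /andP[]]. Qed.

Lemma sample_moments c c' i : observed c i -> observed c' i ->
  [/\ (sample c i : T -> R) \in L2, meanr P (sample c i) = meanr P (pop c) &
      covr P (sample c i) (sample c' i) = covr P (pop c) (pop c')].
Proof.
move=> oc oc'; have := Lfun2_pop c'; have := Lfun2_pop c.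
case: (ltnP i n) => [lt_in | le_ni].
  rewrite !sample_head !pop_head.
  exact (same_law_moments (measurable_vec4 (As i) (Bs i) (Cs i) (Ds i))
    (measurable_vec4 A B C D) (head_law lt_in)
    (measurable_proj4 c) (measurable_proj4 c')).
move: oc oc'; rewrite /observed ltnNge le_ni /=.
move=> /andP[lt_inm ctl] /andP[_ ctl'].
have law := tail_law (i := i); rewrite le_ni lt_inm in law.
rewrite !sample_tail // !pop_tail //.
exact (same_law_moments (measurable_vec2 (Bs i) (Ds i)) (measurable_vec2 B D)
  (law isT) (measurable_proj_control c) (measurable_proj_control c')).
Qed.

Lemma sample_event c i (S : set R) : observed c i -> measurable S ->
  (if (i < n)%N then events_of (fun t => (As i t, Bs i t, Cs i t, Ds i t))
   else events_of (fun t => (Bs i t, Ds i t))) (sample c i @^-1` S).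
Proof.
move=> oc mS; case: ifPn => [_ | le_ni].
  exists (proj4 c @^-1` S); split; last by rewrite sample_head.
  by rewrite -[_ @^-1` _]setTI; exact: measurable_proj4.
move: oc; rewrite /observed (negbTE le_ni) /= => /andP[_ ctl].
exists (proj_control c @^-1` S); split; last by rewrite sample_tail.
by rewrite -[_ @^-1` _]setTI; exact: measurable_proj_control.
Qed.

Lemma covr_sample c c' i j : observed c i -> observed c' j ->
  covr P (sample c i) (sample c' j) =
  if i == j then covr P (pop c) (pop c') else 0.
Proof.
case: eqP => [<- oi oj | /eqP ij oi oj]; first by case: (sample_moments oi oj).
have [ci _ _] := sample_moments oi oi; have [cj _ _] := sample_moments oj oj.
apply: covr_independent => // S1 S2 mS1 mS2.
pose e k := if k == i then sample c i @^-1` S1 else sample c' j @^-1` S2.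
have ji : (j == i) = false by rewrite eq_sym (negbTE ij).
have capE : \bigcap_(k in [set` [:: i; j]]) e k = e i `&` e j.
  apply/seteqP; split => [x hx | x [hxi hxj] k].
    by split; apply: hx; rewrite /= !inE eqxx ?orbT.
  by rewrite /= !inE => /orP[]/eqP->.
have := samples_indep (F := [:: i; j]) (e := e).
rewrite capE !big_cons big_nil mule1 /e eqxx ji; apply.
- by rewrite /= inE ij.
- move=> k /=; rewrite !inE => /orP[]/eqP->.
  + exact: observed_lt oi.
  + exact: observed_lt oj.
- move=> k; rewrite !inE => /orP[]/eqP->; rewrite ?eqxx ?ji.
  + exact: sample_event.
  + exact: sample_event.
Qed.

Definition sample_mean c k : T -> R := smean (fun i t => sample c i t) k.

Lemma Lfun2_sample_mean c k : (forall i, (i < k)%N -> observed c i) ->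
  sample_mean c k \in L2.
Proof.
by move=> ok; apply: Lfun2_smean => i /ok oi; case: (sample_moments oi oi).
Qed.

Lemma meanr_sample_mean c k :
  (0 < k)%N -> (forall i, (i < k)%N -> observed c i) ->
  meanr P (sample_mean c k) = meanr P (pop c).
Proof.
move=> k_gt0 ok; apply: meanr_smean => // i /ok oi.
  by case: (sample_moments oi oi).
by case: (sample_moments oi oi).
Qed.

Lemma covr_sample_mean c c' k l : (0 < k <= l)%N ->
  (forall i, (i < k)%N -> observed c i) ->
  (forall j, (j < l)%N -> observed c' j) ->
  covr P (sample_mean c k) (sample_mean c' l) = covr P (pop c) (pop c') / l%:R.
Proof.
move=> kl ok ol; apply: covr_smean => // [i /ok | j /ol | i j /ok oi /ol oj].
- by move=> oi; case: (sample_moments oi oi).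
- by move=> oj; case: (sample_moments oj oj).
- exact: covr_sample.
Qed.

Definition cv_term e t := meanr P (pop e) - sample_mean e n t.
Definition acv_term e t := sample_mean e (n + m) t - sample_mean e n t.

Local Notation r := (m%:R / (n + m)%:R : R).

Let n_neq0 : n%:R != 0 :> R. Proof. by rewrite pnatr_eq0 -lt0n. Qed.
Let nm_neq0 : (n + m)%:R != 0 :> R.
Proof. by rewrite pnatr_eq0 -lt0n addn_gt0 n_gt0. Qed.

Let Lfun2_head c : sample_mean c n \in L2.
Proof. exact/Lfun2_sample_mean/observed_head. Qed.

Let Lfun2_tail e : is_control e -> sample_mean e (n + m) \in L2.
Proof. by move=> ctl; exact/Lfun2_sample_mean/observed_tail. Qed.

Let covr_head c c' :
  covr P (sample_mean c n) (sample_mean c' n) = covr P (pop c) (pop c') / n%:R.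
Proof.
by apply: covr_sample_mean; rewrite ?n_gt0 ?leqnn //; exact: observed_head.
Qed.

Let covr_head_tail c e : is_control e ->
  covr P (sample_mean c n) (sample_mean e (n + m)) =
  covr P (pop c) (pop e) / (n + m)%:R.
Proof.
move=> ctl; apply: covr_sample_mean; rewrite ?n_gt0 ?leq_addr //.
  exact: observed_head.
exact: observed_tail.
Qed.

Let covr_tail e e' : is_control e -> is_control e' ->
  covr P (sample_mean e (n + m)) (sample_mean e' (n + m)) =
  covr P (pop e) (pop e') / (n + m)%:R.
Proof.
move=> ctl ctl'; apply: covr_sample_mean; rewrite ?addn_gt0 ?n_gt0 ?leqnn //.
  exact: observed_tail.
exact: observed_tail.
Qed.

Lemma Lfun2_cv_term e : cv_term e \in L2.
Proof. by apply: Lfun2B; [exact: Lfun_cst | exact: Lfun2_head]. Qed.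

Lemma Lfun2_acv_term e : is_control e -> acv_term e \in L2.
Proof.
by move=> ctl; apply: Lfun2B; [exact: Lfun2_tail | exact: Lfun2_head].
Qed.

Lemma meanr_cv_term e : meanr P (cv_term e) = 0.
Proof.
rewrite meanrB ?Lfun_cst ?Lfun2_head // meanr_cst meanr_sample_mean ?subrr //.
exact: observed_head.
Qed.

Lemma meanr_acv_term e : is_control e -> meanr P (acv_term e) = 0.
Proof.
move=> ctl.
rewrite meanrB ?Lfun2_tail ?Lfun2_head // !meanr_sample_mean ?subrr //.
- exact: observed_head.
- by rewrite addn_gt0 n_gt0.
- exact: observed_tail.
Qed.

Lemma covr_acv_term c e : is_control e ->
  covr P (sample_mean c n) (acv_term e) =
  r * covr P (sample_mean c n) (cv_term e).
Proof.
move=> ctl; rewrite !covrBr ?Lfun_cst ?Lfun2_tail // covr_cstr.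
by rewrite covr_head_tail // covr_head; field; rewrite n_neq0 -natrD nm_neq0.
Qed.

Lemma covr_acv_terms e e' : is_control e -> is_control e' ->
  covr P (acv_term e) (acv_term e') = r * covr P (cv_term e) (cv_term e').
Proof.
move=> ctl ctl'.
rewrite !covrBB ?Lfun_cst ?Lfun2_head ?Lfun2_tail //.
rewrite covr_cstl !covr_cstr covr_cstl covr_tail //.
rewrite (covrC P (sample_mean e (n + m))) !covr_head_tail // covr_head.
by rewrite (covrC P (pop e')); field; rewrite n_neq0 -natrD nm_neq0.
Qed.

Lemma Phi_acv_scale a b :
  Phi P (fun t => sample_mean cA n t + a * acv_term cB t)
        (fun t => sample_mean cC n t + b * acv_term cD t)
  - Phi P (sample_mean cA n) (sample_mean cC n) =
  r * (Phi P (fun t => sample_mean cA n t + a * cv_term cB t)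
             (fun t => sample_mean cC n t + b * cv_term cD t)
       - Phi P (sample_mean cA n) (sample_mean cC n)).
Proof.
apply: Phi_control_scale; rewrite ?Lfun2_head ?Lfun2_cv_term ?Lfun2_acv_term //.
all: by rewrite ?meanr_cv_term ?meanr_acv_term ?covr_acv_term ?covr_acv_terms.
Qed.

End iid_sampling.

Unset Implicit Arguments.

Theorem mainTheorem7 (d : measure_display) (T : measurableType d) (R : realType)
  (P : probability T R) (A B C D : {RV P >-> R})
  (As Bs Cs Ds : nat -> {RV P >-> R}) (n m : nat) :
  (A : T -> R) \in Lfun P 2%:E -> (B : T -> R) \in Lfun P 2%:E ->
  (C : T -> R) \in Lfun P 2%:E -> (D : T -> R) \in Lfun P 2%:E ->
  fine 'E_P[A] != 0 -> fine 'E_P[C] != 0 ->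
  (0 < n)%N -> (0 < m)%N ->
  (* (A_i,B_i,C_i,D_i), i < n, are copies of (A,B,C,D) *)
  (forall i, (i < n)%N ->
     same_law P (fun t => (As i t, Bs i t, Cs i t, Ds i t))
                (fun t => (A t, B t, C t, D t))) ->
  (* (B_i,D_i), n <= i < n+m, are copies of (B,D) *)
  (forall i, (n <= i < n + m)%N ->
     same_law P (fun t => (Bs i t, Ds i t)) (fun t => (B t, D t))) ->
  (* all n + m sample vectors are mutually independent *)
  mutually_independent P [set i | (i < n + m)%N]
    (fun i => if (i < n)%N
              then events_of (fun t => (As i t, Bs i t, Cs i t, Ds i t))
              else events_of (fun t => (Bs i t, Ds i t))) ->
  let An := smean (fun i t => As i t) n in
  let Bn := smean (fun i t => Bs i t) n in
  let Cn := smean (fun i t => Cs i t) n in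
  let Dn := smean (fun i t => Ds i t) n in
  let Bnm := smean (fun i t => Bs i t) (n + m) in
  let Dnm := smean (fun i t => Ds i t) (n + m) in
  let N (a : R) : T -> R := fun t => An t + a * (fine 'E_P[B] - Bn t) in
  let M (b : R) : T -> R := fun t => Cn t + b * (fine 'E_P[D] - Dn t) in
  let Nt (a : R) : T -> R := fun t => An t + a * (Bnm t - Bn t) in
  let Mt (b : R) : T -> R := fun t => Cn t + b * (Dnm t - Dn t) in
  let r : R := m%:R / (n + m)%:R in
  [/\ (forall a b : R,
         Phi P (Nt a) (Mt b) - Phi P An Cn = r * (Phi P (N a) (M b) - Phi P An Cn)),
      (forall a : R,
         Phi P (Nt a) Cn - Phi P An Cn = r * (Phi P (N a) Cn - Phi P An Cn)),
      (forall a b : R,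
         (forall a' b' : R, Phi P (Nt a) (Mt b) <= Phi P (Nt a') (Mt b')) <->
         (forall a' b' : R, Phi P (N a) (M b) <= Phi P (N a') (M b'))) &
      (forall a : R,
         (forall a' : R, Phi P (Nt a) Cn <= Phi P (Nt a') Cn) <->
         (forall a' : R, Phi P (N a) Cn <= Phi P (N a') Cn))].

Proof.
move=> A2 B2 C2 D2 _ _ n_gt0 m_gt0 head_law tail_law indep.
move=> An Bn Cn Dn Bnm Dnm N M Nt Mt r.
have scale a b : Phi P (Nt a) (Mt b) - Phi P An Cn =
                 r * (Phi P (N a) (M b) - Phi P An Cn).
  exact: (Phi_acv_scale A2 B2 C2 D2 n_gt0 head_law tail_law indep).
have scale_num a : Phi P (Nt a) Cn - Phi P An Cn =
                   r * (Phi P (N a) Cn - Phi P An Cn).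
  have Cn_shift (V : T -> R) : (fun t => Cn t + 0 * V t) = Cn.
    by apply/funext => t; rewrite mul0r addr0.
  by have := scale a 0; rewrite /Mt /M !Cn_shift.
have r_gt0 : 0 < r by rewrite divr_gt0 ?ltr0n ?addn_gt0 ?m_gt0 ?orbT.
split => // [a b | a]; split=> hmin.
- by move=> a' b'; rewrite -(ler_shift_scale r_gt0 (scale a b) (scale a' b')).
- by move=> a' b'; rewrite (ler_shift_scale r_gt0 (scale a b) (scale a' b')).
- by move=> a'; rewrite -(ler_shift_scale r_gt0 (scale_num a) (scale_num a')).
- by move=> a'; rewrite (ler_shift_scale r_gt0 (scale_num a) (scale_num a')).
Qed.
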